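(* Let $v\ge 1$, $\epsilon>0$, and let $z\in[0,1]^v$. Suppose we are given real values $\hat f_s$, one for each $s\in\{0,1\}^v$, satisfying $\left|\hat f_s-\frac1v\langle s,z\rangle\right|\le\epsilon$ for all $s\in\{0,1\}^v$. Then it is possible, using only the values $\{\hat f_s\}$, to identify a vector $\hat z\in[0,1]^v$ satisfying $\frac1v\|\hat z-z\|_1\le 4\epsilon$.
   Context: $\langle s,z\rangle=\sum_{i=1}^v s_iz_i$. In the paper $z=(f_T(\mathcal{D}_1),\dots,f_T(\mathcal{D}_v))$ is the vector of frequencies of a fixed itemset $T$ in $v$ databases, and $\hat f_s$ are approximate answers to associated itemset queries, but the statement only uses $z\in[0,1]^v$. *)

From mathcomp Require Import all_boot all_order all_algebra.
Set Implicit Arguments. Unset Strict Implicit. Unset Printing Implicit Defensive.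
Import Order.TTheory GRing.Theory Num.Theory.
Local Open Scope ring_scope.

Definition inner (R : ringType) (v : nat) (s : {ffun 'I_v -> bool}) (z : 'I_v -> R) : R :=
  \sum_(i < v) (s i)%:R * z i.

Definition l1norm (R : numDomainType) (v : nat) (x : 'I_v -> R) : R :=
  \sum_(i < v) `|x i|.

(* Both z and any candidate x in [0,1]^v whose subset sums all lie within
   eps of the answers fhat are consistent with fhat, so for every s the
   subset sum <s, x - z> is at most 2 eps v in absolute value.  Taking s to
   be the set where x - z is nonnegative, resp. negative, the two sums add up
   to ||x - z||_1, which is therefore at most 4 eps v.  The decoder simply
   picks such a consistent candidate. *)
From mathcomp Require Import all_boot all_order all_algebra.
From Stdlib Require Import ClassicalEpsilon.
From mathcomp Require Import lra.
Set Implicit Arguments. Unset Strict Implicit. Unset Printing Implicit Defensive.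
Import Order.TTheory GRing.Theory Num.Theory.
Local Open Scope ring_scope.

Lemma innerB (R : nzRingType) (v : nat) (s : {ffun 'I_v -> bool}) (x y : 'I_v -> R) :
  inner s (fun i => x i - y i) = inner s x - inner s y.
Proof. by rewrite /inner -sumrB; apply: eq_bigr => i _; rewrite mulrBr. Qed.

Lemma l1norm_inner_sign (R : realDomainType) (v : nat) (w : 'I_v -> R) :
  l1norm w = inner [ffun i => 0 <= w i] w - inner [ffun i => w i < 0] w.
Proof.
rewrite /l1norm /inner -sumrB; apply: eq_bigr => i _; rewrite !ffunE.
have [w_ge0 | w_lt0] := leP 0 (w i).
  by rewrite ger0_norm // mul1r mul0r subr0.
by rewrite ltr0_norm // mul0r mul1r sub0r.
Qed.

Lemma l1norm_le_inner (R : realDomainType) (v : nat) (w : 'I_v -> R) (c : R) :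
  (forall s, `|inner s w| <= c) -> l1norm w <= c + c.
Proof.
move=> inner_le; rewrite l1norm_inner_sign.
apply: lerD; first exact: le_trans (ler_norm _) (inner_le _).
apply: le_trans (inner_le _); rewrite -normrN; exact: ler_norm.
Qed.

Definition consistent (R : numFieldType) (v : nat) (eps : R)
    (fhat : {ffun 'I_v -> bool} -> R) (x : 'I_v -> R) :=
  (forall i, 0 <= x i <= 1) /\ (forall s, `|fhat s - v%:R^-1 * inner s x| <= eps).

Lemma consistent_inner_diff (R : numFieldType) (v : nat) (eps : R) fhat
    (x y : 'I_v -> R) :
  (0 < v)%N -> consistent eps fhat x -> consistent eps fhat y ->
  forall s, `|inner s (fun i => x i - y i)| <= (eps + eps) * v%:R.
Proof.
move=> v_gt0 [_ fx] [_ fy] s.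
have v_pos : 0 < v%:R :> R by rewrite ltr0n.
have dist_le : `|v%:R^-1 * inner s x - v%:R^-1 * inner s y| <= eps + eps.
  apply: le_trans (ler_distD (fhat s) _ _) _.
  by rewrite distrC; apply: lerD.
rewrite -ler_pdivrMr // mulrC -[v%:R^-1]gtr0_norm ?invr_gt0 // -normrM.
by rewrite innerB mulrBr.
Qed.

(* [epsilon] returns the zero vector when no consistent candidate exists;
   under the hypotheses of [lemma4] the true [z] is always one. *)
Definition decode (R : numFieldType) (v : nat) (eps : R)
    (fhat : {ffun 'I_v -> bool} -> R) : 'I_v -> R :=
  epsilon (inhabits (fun=> 0)) (consistent eps fhat).

Lemma decode_consistent (R : numFieldType) (v : nat) (eps : R) fhat
    (z : 'I_v -> R) :
  consistent eps fhat z -> consistent eps fhat (decode eps fhat).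
Proof. by move=> z_cons; apply: epsilon_spec; exists z. Qed.

Theorem lemma4 (R : realFieldType) (v : nat) (eps : R) :
  (1 <= v)%N -> 0 < eps ->
  exists D : ({ffun 'I_v -> bool} -> R) -> ('I_v -> R),
    forall (z : 'I_v -> R) (fhat : {ffun 'I_v -> bool} -> R),
      (forall i, 0 <= z i <= 1) ->
      (forall s, `|fhat s - v%:R^-1 * inner s z| <= eps) ->
      (forall i, 0 <= D fhat i <= 1) /\
      v%:R^-1 * l1norm (fun i => D fhat i - z i) <= 4 * eps.
Proof.
move=> v_gt0 _; exists (decode eps) => z fhat z01 fz.
have z_cons : consistent eps fhat z by [].
have zh_cons := decode_consistent z_cons.
split; first by case: zh_cons.
rewrite mulrC ler_pdivrMr ?ltr0n //.
apply: le_trans (l1norm_le_inner (consistent_inner_diff v_gt0 zh_cons z_cons)) _.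
lra.
Qed.
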